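(* Let $X$ be a $P$-space with $X=\bigcup_{\alpha\in\Lambda}X_\alpha$, where each $X_\alpha$ is a closed locally Menger subspace of $X$ and the family $\{X_\alpha:\alpha\in\Lambda\}$ is locally countable in $X$ (every point has a neighbourhood meeting only countably many $X_\alpha$). Then $X$ is locally Menger.
   Context: A $P$-space is a space in which every countable intersection of open sets is open. A space $X$ is Menger if for each sequence $(\mathcal{U}_n)$ of open covers of $X$ there is a sequence $(\mathcal{V}_n)$ with each $\mathcal{V}_n$ a finite subset of $\mathcal{U}_n$ and $\bigcup_{n}\bigcup\mathcal{V}_n=X$. A space $X$ is locally Menger if for each $x\in X$ there exist an open set $U$ and a Menger subspace $Y$ of $X$ with $x\in U\subseteq Y$. *)

From mathcomp Require Import all_boot all_order.
From mathcomp Require Import all_classical topology.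
Set Implicit Arguments. Unset Strict Implicit. Unset Printing Implicit Defensive.
Local Open Scope classical_set_scope.

Definition P_space (X : topologicalType) : Prop :=
  forall F : nat -> set X, (forall n, open (F n)) -> open (\bigcap_n F n).

(* Y (a subspace of X) is Menger: for each sequence (U_n) of covers of Y by
   open sets (open in X; equivalently traces of those are the open covers of
   the subspace Y), there are finite V_n subset of U_n whose unions cover Y. *)
Definition Menger_set (X : topologicalType) (Y : set X) : Prop :=
  forall U : nat -> set (set X),
    (forall n, forall A, U n A -> open A) ->
    (forall n, Y `<=` \bigcup_(A in U n) A) ->
    exists V : nat -> set (set X),
      (forall n, finite_set (V n) /\ V n `<=` U n) /\
      Y `<=` \bigcup_n \bigcup_(A in V n) A.

Definition locally_Menger_set (X : topologicalType) (Y : set X) : Prop :=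
  forall x, Y x -> exists (O Z : set X),
    open O /\ O x /\ Z `<=` Y /\ Menger_set Z /\ O `&` Y `<=` Z.

Definition locally_Menger (X : topologicalType) : Prop :=
  locally_Menger_set [set: X].

Definition locally_countable_family (X : topologicalType) (L : Type)
  (S : L -> set X) : Prop :=
  forall x : X, exists W : set X, nbhs x W /\
    countable [set a : L | S a `&` W !=set0].

(* Around x pick an open B meeting only countably many S a.  Each S a gives an
   open O_a containing x whose trace on S a lies in a Menger set Z_a (when x is
   not in S a, the open complement of S a and Z_a = set0 do).  In a P-space
   B `&` \bigcap_a O_a is still open, and it lies in \bigcup_a Z_a, a countable
   union of Menger sets, hence Menger. *)

From mathcomp Require Import all_boot all_order.
From mathcomp Require Import all_classical topology.
Set Implicit Arguments. Unset Strict Implicit. Unset Printing Implicit Defensive.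
Local Open Scope classical_set_scope.

Lemma countable_enum (T : Type) (D : set T) : countable D ->
  exists e : nat -> option T,
    (forall n i, e n = Some i -> D i) /\
    (forall i, D i -> exists n, e n = Some i).
Proof.
move=> /countable_injP[f finj].
pose e n := if pselect (exists i, D i /\ f i = n) is left h
  then Some (projT1 (cid h)) else None.
exists e; split => [n i|i Di].
  by rewrite /e; case: pselect => // h [<-]; exact: (projT2 (cid h)).1.
exists (f i); rewrite /e; case: pselect => [h|]; last by case; exists i.
have [Dj fj] := projT2 (cid h); congr Some.
by apply: finj; rewrite ?inE //; congruence.
Qed.

Lemma P_space_open_bigcap (X : topologicalType) (T : Type) (D : set T)
    (O : T -> set X) :
  P_space X -> countable D -> (forall i, D i -> open (O i)) ->
  open (\bigcap_(i in D) O i).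
Proof.
move=> HP /countable_enum[e [eD De]] Oo.
have -> : \bigcap_(i in D) O i = \bigcap_n oapp O setT (e n).
  apply/seteqP; split => [y Oy n _|y Oy i /De[n en]].
    by case E: (e n) => [i|] //=; apply: Oy; exact: eD E.
  by have := Oy n I; rewrite en.
apply: HP => n; case E: (e n) => [i|] /=; [exact/Oo/(eD _ _ E)|exact: openT].
Qed.

Lemma Menger_set0 (X : topologicalType) : Menger_set (@set0 X).
Proof. by move=> U _ _; exists (fun=> set0); split=> // n; split. Qed.

Lemma Menger_bigcup_nat (X : topologicalType) (Z : nat -> set X) :
  (forall k, Menger_set (Z k)) -> Menger_set (\bigcup_k Z k).
Proof.
move=> ZM U Uo Ucov.
have /choice[V ZV] : forall k, exists V : nat -> set (set X),
    (forall n, finite_set (V n) /\ V n `<=` U (pickle (k, n))) /\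
    Z k `<=` \bigcup_n \bigcup_(A in V n) A.
  by move=> k; apply: ZM => n y Zy; [exact: Uo Zy|apply: Ucov; exists k].
exists (fun m => if pickle_inv m is Some (k, n) then V k n else set0); split.
  move=> m; case E: (pickle_inv m) => [[k n]|]; last by split.
  have := @pickle_invK (nat * nat)%type m; rewrite E /= => <-.
  exact: (ZV k).1.
move=> y [k _ /(ZV k).2[n _ [A VA Ay]]].
by exists (pickle (k, n)) => //; rewrite pickleK_inv; exists A.
Qed.

Lemma Menger_bigcup (X : topologicalType) (T : Type) (D : set T)
    (Z : T -> set X) :
  countable D -> (forall i, D i -> Menger_set (Z i)) ->
  Menger_set (\bigcup_(i in D) Z i).
Proof.
move=> /countable_enum[e [eD De]] ZM.
have -> : \bigcup_(i in D) Z i = \bigcup_n oapp Z set0 (e n).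
  apply/seteqP; split => [y [i /De[n en] Zy]|y [n _]].
    by exists n => //; rewrite en.
  by case E: (e n) => [i|] //= Zy; exists i => //; exact: eD E.
apply: Menger_bigcup_nat => n; case E: (e n) => [i|] /=.
  exact/ZM/(eD _ _ E).
exact: Menger_set0.
Qed.

Lemma closed_locally_Menger_set_nbhs (X : topologicalType) (S : set X) :
  closed S -> locally_Menger_set S -> forall x, exists O Z,
    open O /\ O x /\ Menger_set Z /\ O `&` S `<=` Z.
Proof.
move=> Scl SLM x; have [Sx|nSx] := pselect (S x).
  by have [O [Z [? [? [_ [? ?]]]]]] := SLM x Sx; exists O, Z.
exists (~` S), set0; split; first exact: closed_openC.
by split=> //; split; [exact: Menger_set0|move=> y []].
Qed.

Theorem theorem4p6 (X : topologicalType) (L : Type) (S : L -> set X) :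
  P_space X ->
  \bigcup_(a in [set: L]) S a = [set: X] ->
  (forall a, closed (S a)) ->
  (forall a, locally_Menger_set (S a)) ->
  locally_countable_family S ->
  locally_Menger X.
Proof.
move=> XP Scov Scl SLM Slc x _.
have [W [+ Wcount]] := Slc x; rewrite nbhsE => -[B [Bo Bx] BW].
set C := [set a | S a `&` W !=set0] in Wcount.
have /choice[O /choice[Z OZ]] a :=
  closed_locally_Menger_set_nbhs (Scl a) (SLM a) x.
exists (B `&` \bigcap_(a in C) O a), (\bigcup_(a in C) Z a).
split.
  by apply: openI => //; apply: P_space_open_bigcap => // a _; exact: (OZ a).1.
split; first by split=> // a _; exact: (OZ a).2.1.
split=> //; split; first by apply: Menger_bigcup => // a _; exact: (OZ a).2.2.1.
move=> y [[By Oy] _]; have : [set: X] y by [].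
rewrite -Scov => -[a _ Say]; have Ca : C a by exists y; split=> //; exact: BW.
by exists a => //; apply: (OZ a).2.2.2; split=> //; exact: Oy.
Qed.
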